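(* Let $A\in\mathbb{R}^{m\times n}$, let $k\geq1$, $\alpha>0$, $\Delta\geq 0$, and $0<L\leq U$ be such that \[ L\|v\|_2\leq\|Av\|_1\leq U\|v\|_2 \] for all $(1+\alpha^2)k$-sparse vectors $v\in\mathbb{R}^n$. Let $S\subset[n]$ be fixed with $|S|=k$. Then for all \[ v\in V_S=\{v\in\mathbb{R}^n : \Delta+\|v_S\|_1\geq\|v_{\overline{S}}\|_1\} \] we have \[ \frac{L}{1+\alpha}\left(\alpha-\frac{U}{L}\right)\|v\|_2-\frac{2U\Delta}{\alpha\sqrt{k}} \leq \|Av\|_1 \leq U\left(1+\frac{1}{\alpha}\right)\|v\|_2+\frac{U\Delta}{\alpha\sqrt{k}}. \]
   Context: For $v\in\mathbb{R}^n$ and $T\subset[n]$, $v_T$ denotes $v$ with all entries whose indices lie outside $T$ set to $0$, and $\overline{S}=[n]\setminus S$. A vector is $s$-sparse if it has at most $s$ nonzero entries. *)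

From HB Require Import structures.
From mathcomp Require Import all_boot all_order all_algebra.
Set Implicit Arguments. Unset Strict Implicit. Unset Printing Implicit Defensive.
Import Order.TTheory GRing.Theory Num.Theory.
Local Open Scope ring_scope.

Definition norm1 (R : rcfType) (n : nat) (v : 'cV[R]_n) : R :=
  \sum_(i < n) `|v i 0|.

Definition norm2 (R : rcfType) (n : nat) (v : 'cV[R]_n) : R :=
  Num.sqrt (\sum_(i < n) (v i 0) ^+ 2).

Definition restr (R : rcfType) (n : nat) (T : {set 'I_n}) (v : 'cV[R]_n) : 'cV[R]_n :=
  \col_i (if i \in T then v i 0 else 0).

Definition sparse (R : rcfType) (n : nat) (s : R) (v : 'cV[R]_n) : Prop :=
  (#|[set i | v i 0 != 0]|%:R <= s).

(* Put beta = alpha^2 k and let B be a set of at most beta coordinates off S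
   carrying the largest entries of v; set T = S ∪ B, y = v_T and r = v_{~T}.
   Then y is (1 + alpha^2) k-sparse, so the hypothesis controls ||A y||_1.
   The tail r is handled by Maurey's empirical method: it is an average of
   P-sparse vectors, P = k + |B|, of mean squared l2 norm
   (1 - 1/P) ||r||_2^2 + ||r||_1^2 / P, and since every entry of r is dominated
   by every entry of v on B, this is at most ||v_{~S}||_1^2 / beta.  Hence
   ||A r||_1 / U and ||r||_2 are both at most
   ||v_{~S}||_1 / (alpha sqrt k) <= (Delta + sqrt k ||y||_2) / (alpha sqrt k),
   by the cone condition and Cauchy-Schwarz on S.  The two bounds follow from
   ||A y||_1 - ||A r||_1 <= ||A v||_1 <= ||A y||_1 + ||A r||_1 and
   ||y||_2 <= ||v||_2 <= ||y||_2 + ||r||_2. *)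

From HB Require Import structures.
From mathcomp Require Import all_boot all_order all_algebra.
From mathcomp Require Import ring lra.
Set Implicit Arguments. Unset Strict Implicit. Unset Printing Implicit Defensive.
Import Order.TTheory GRing.Theory Num.Theory.
Local Open Scope ring_scope.

Section ColumnNorms.
Variable R : rcfType.

Definition sqnorm2 n (x : 'cV[R]_n) : R := \sum_i x i 0 ^+ 2.

Definition supp n (x : 'cV[R]_n) : {set 'I_n} := [set i | x i 0 != 0].

Definition normoo n (x : 'cV[R]_n) : R := \big[Num.max/0]_i `|x i 0|.

Lemma norm2E n (x : 'cV[R]_n) : norm2 x = Num.sqrt (sqnorm2 x).
Proof. by []. Qed.

Lemma norm1_ge0 n (x : 'cV[R]_n) : 0 <= norm1 x.
Proof. exact: sumr_ge0. Qed.

Lemma sqnorm2_ge0 n (x : 'cV[R]_n) : 0 <= sqnorm2 x.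
Proof. by apply: sumr_ge0 => i _; rewrite sqr_ge0. Qed.

Lemma norm1_eq0 n (x : 'cV[R]_n) : (norm1 x == 0) = (x == 0).
Proof.
apply/idP/eqP => [/eqP x0|->]; last by rewrite /norm1 big1 // => i _; rewrite mxE normr0.
apply/colP => i; rewrite mxE; apply/normr0_eq0/eqP.
by rewrite eq_le normr_ge0 andbT -x0 /norm1 (bigD1 i) //= lerDl sumr_ge0.
Qed.

Lemma norm10 n : norm1 (0 : 'cV[R]_n) = 0.
Proof. by apply/eqP; rewrite norm1_eq0. Qed.

Lemma ler_norm1D n (x y : 'cV[R]_n) : norm1 (x + y) <= norm1 x + norm1 y.
Proof. rewrite -big_split; apply: ler_sum => i _; rewrite mxE; exact: ler_normD. Qed.

Lemma norm1N n (x : 'cV[R]_n) : norm1 (- x) = norm1 x.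
Proof. by apply: eq_bigr => i _; rewrite mxE normrN. Qed.

Lemma lerB_norm1D n (x y : 'cV[R]_n) : norm1 x - norm1 y <= norm1 (x + y).
Proof.
have := ler_norm1D (x + y) (- y); rewrite addrK norm1N; lra.
Qed.

Lemma norm1Z n (a : R) (x : 'cV[R]_n) : 0 <= a -> norm1 (a *: x) = a * norm1 x.
Proof. by move=> a0; rewrite mulr_sumr; apply: eq_bigr => i _; rewrite mxE normrM ger0_norm. Qed.

Lemma ler_norm1_sum n (I : finType) (x : I -> 'cV[R]_n) :
  norm1 (\sum_f x f) <= \sum_f norm1 (x f).
Proof.
rewrite /norm1 exchange_big; apply: ler_sum => i _; rewrite summxE; exact: ler_norm_sum.
Qed.

Lemma normoo_ge0 n (x : 'cV[R]_n) : 0 <= normoo x.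
Proof. exact: bigmax_ge_id. Qed.

Lemma normoo_le_norm1 n (x : 'cV[R]_n) : normoo x <= norm1 x.
Proof.
apply: bigmax_le => [|i _]; first exact: norm1_ge0.
by rewrite /norm1 (bigD1 i) //= lerDl sumr_ge0.
Qed.

Lemma sqnorm2_le_normoo_norm1 n (x : 'cV[R]_n) : sqnorm2 x <= normoo x * norm1 x.
Proof.
rewrite mulr_sumr; apply: ler_sum => i _.
by rewrite -real_normK ?num_real // expr2 ler_wpM2r // le_bigmax.
Qed.

Lemma sqnorm2_le_sqr_norm1 n (x : 'cV[R]_n) : sqnorm2 x <= norm1 x ^+ 2.
Proof.
apply: (le_trans (sqnorm2_le_normoo_norm1 x)).
by rewrite expr2 ler_wpM2r ?norm1_ge0 ?normoo_le_norm1.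
Qed.

Lemma restrE n T (v : 'cV[R]_n) i : restr T v i 0 = if i \in T then v i 0 else 0.
Proof. exact: mxE. Qed.

Lemma norm1_restr n T (v : 'cV[R]_n) : norm1 (restr T v) = \sum_(i in T) `|v i 0|.
Proof.
by rewrite big_mkcond; apply: eq_bigr => i _; rewrite restrE; case: ifP; rewrite ?normr0.
Qed.

Lemma sqnorm2_restr n T (v : 'cV[R]_n) : sqnorm2 (restr T v) = \sum_(i in T) v i 0 ^+ 2.
Proof.
by rewrite big_mkcond; apply: eq_bigr => i _; rewrite restrE; case: ifP; rewrite ?expr0n.
Qed.

Lemma restr_splitC n T (v : 'cV[R]_n) : v = restr T v + restr (~: T) v.
Proof. by apply/colP => i; rewrite !mxE inE; case: (i \in T); rewrite ?addr0 ?add0r. Qed.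

Lemma sqnorm2_restr_splitC n T (v : 'cV[R]_n) :
  sqnorm2 v = sqnorm2 (restr T v) + sqnorm2 (restr (~: T) v).
Proof.
rewrite !sqnorm2_restr /sqnorm2 (bigID (mem T)) /=.
by congr (_ + _); apply: eq_bigl => i; rewrite inE.
Qed.

Lemma restr_restr n (S T : {set 'I_n}) (v : 'cV[R]_n) :
  S \subset T -> restr S (restr T v) = restr S v.
Proof.
move=> /subsetP ST; apply/colP => i; rewrite !restrE.
by case: ifP => // /ST ->.
Qed.

Lemma sqrtrD_le (a b : R) : 0 <= a -> 0 <= b ->
  Num.sqrt (a + b) <= Num.sqrt a + Num.sqrt b.
Proof.
move=> a0 b0; rewrite -[X in _ <= X]ger0_norm ?addr_ge0 ?sqrtr_ge0 // -sqrtr_sqr.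
rewrite ler_wsqrtr // sqrrD !sqr_sqrtr // addrAC lerDl.
by rewrite mulrn_wge0 ?mulr_ge0 ?sqrtr_ge0.
Qed.

Lemma norm2_restr_le n T (v : 'cV[R]_n) : norm2 (restr T v) <= norm2 v.
Proof.
by rewrite !norm2E ler_wsqrtr // (sqnorm2_restr_splitC T v) lerDl sqnorm2_ge0.
Qed.

Lemma norm2_le_restr_splitC n T (v : 'cV[R]_n) :
  norm2 v <= norm2 (restr T v) + norm2 (restr (~: T) v).
Proof. by rewrite !norm2E (sqnorm2_restr_splitC T v) sqrtrD_le ?sqnorm2_ge0. Qed.

Lemma sqr_sum_le_weighted (I : finType) (c a : I -> R) : (forall i, 0 <= c i) ->
  (\sum_i c i * a i) ^+ 2 <= (\sum_i c i) * (\sum_i c i * a i ^+ 2).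
Proof.
move=> c_ge0.
have expand : \sum_i \sum_j c i * c j * (a i - a j) ^+ 2
    = \sum_i \sum_j c i * (c j * a j ^+ 2) + \sum_i \sum_j c i * a i ^+ 2 * c j
      - 2 * \sum_i \sum_j c i * a i * (c j * a j).
  rewrite mulr_sumr -big_split -sumrB; apply: eq_bigr => i _.
  by rewrite mulr_sumr -big_split -sumrB; apply: eq_bigr => j _ /=; ring.
have : 0 <= \sum_i \sum_j c i * c j * (a i - a j) ^+ 2.
  apply: sumr_ge0 => i _; apply: sumr_ge0 => j _.
  by rewrite mulr_ge0 ?sqr_ge0 // mulr_ge0 ?c_ge0.
rewrite expand -!big_distrlr /= -expr2; lra.
Qed.

Lemma sum_mul_sqrt_le (I : finType) (mu s : I -> R) :
  (forall i, 0 <= mu i) -> (forall i, 0 <= s i) -> \sum_i mu i = 1 ->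
  \sum_i mu i * Num.sqrt (s i) <= Num.sqrt (\sum_i mu i * s i).
Proof.
move=> mu_ge0 s_ge0 mu_sum1.
have := sqr_sum_le_weighted (fun i => Num.sqrt (s i)) mu_ge0.
have -> : \sum_i mu i * Num.sqrt (s i) ^+ 2 = \sum_i mu i * s i.
  by apply: eq_bigr => i _; rewrite sqr_sqrtr.
rewrite mu_sum1 mul1r => cs.
rewrite -[X in X <= _]ger0_norm ?sumr_ge0 // => [|i _]; last by rewrite mulr_ge0 ?sqrtr_ge0.
by rewrite -sqrtr_sqr ler_wsqrtr.
Qed.

Lemma norm1_restr_le n T (v : 'cV[R]_n) :
  norm1 (restr T v) <= Num.sqrt #|T|%:R * norm2 (restr T v).
Proof.
have ind_mul (i : 'I_n) (y : R) : (i \in T)%:R * y = if i \in T then y else 0.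
  by case: (i \in T); rewrite ?mul1r ?mul0r.
have cardT : \sum_i ((i \in T)%:R : R) = #|T|%:R.
  by rewrite -sum1_card natr_sum [RHS]big_mkcond /=; apply: eq_bigr => i _; case: (i \in T).
have l1 : \sum_i (i \in T)%:R * `|v i 0| = norm1 (restr T v).
  by rewrite norm1_restr [RHS]big_mkcond /=; apply: eq_bigr => i _; rewrite ind_mul.
have l2 : \sum_i (i \in T)%:R * `|v i 0| ^+ 2 = sqnorm2 (restr T v).
  rewrite sqnorm2_restr [RHS]big_mkcond /=; apply: eq_bigr => i _.
  by rewrite ind_mul real_normK ?num_real.
have := sqr_sum_le_weighted (fun i => `|v i 0|) (fun i => ler0n R (i \in T)).
rewrite cardT l1 l2 norm2E -sqrtrM ?ler0n // => cs.
rewrite -[X in X <= _]ger0_norm ?norm1_ge0 // -sqrtr_sqr.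
exact: ler_wsqrtr.
Qed.

Lemma norm1_restrC_le_cone n (S T : {set 'I_n}) (Delta : R) (v : 'cV[R]_n) :
  S \subset T -> norm1 (restr (~: S) v) <= Delta + norm1 (restr S v) ->
  norm1 (restr (~: S) v) <= Delta + Num.sqrt #|S|%:R * norm2 (restr T v).
Proof.
move=> ST cone; apply: le_trans cone _; rewrite lerD2l.
apply: le_trans (norm1_restr_le S v) (ler_wpM2l (sqrtr_ge0 _) _).
by rewrite -(restr_restr v ST) norm2_restr_le.
Qed.

End ColumnNorms.

Section EmpiricalMethod.
Variables (R : rcfType) (n P : nat).

Definition ffun_weight (q : 'I_n -> R) (f : {ffun 'I_P -> 'I_n}) : R := \prod_j q (f j).

Definition occ (f : {ffun 'I_P -> 'I_n}) (r : 'I_n) : R := \sum_j (f j == r)%:R.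

Lemma sum_ffun_weight_prod (q a : 'I_n -> R) (J : {set 'I_P}) :
  \sum_i q i = 1 ->
  \sum_f ffun_weight q f * \prod_(j in J) a (f j) = (\sum_i q i * a i) ^+ #|J|.
Proof.
move=> q_sum1; rewrite -prodr_const.
transitivity (\prod_j \sum_i q i * if j \in J then a i else 1).
  rewrite bigA_distr_bigA /=; apply: eq_bigr => f _.
  by rewrite /ffun_weight [X in _ * X]big_mkcond -big_split.
rewrite [RHS]big_mkcond; apply: eq_bigr => j _; case: (j \in J) => //.
by under eq_bigr do rewrite mulr1.
Qed.

Lemma sum_ffun_weight (q : 'I_n -> R) : \sum_i q i = 1 -> \sum_f ffun_weight q f = 1.
Proof.
move=> /(sum_ffun_weight_prod (fun=> 1) set0); rewrite cards0 expr0 => <-.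
by apply: eq_bigr => f _; rewrite big_set0 mulr1.
Qed.

Lemma sum_ffun_weight_hits (q : 'I_n -> R) (J : {set 'I_P}) (r : 'I_n) :
  \sum_i q i = 1 ->
  \sum_f ffun_weight q f * \prod_(j in J) (f j == r)%:R = q r ^+ #|J|.
Proof.
move=> /(sum_ffun_weight_prod (fun i => (i == r)%:R) J) ->.
rewrite (bigD1 r) //= eqxx mulr1 big1 ?addr0 // => i /negbTE ->.
exact: mulr0.
Qed.

Lemma sum_ffun_weight_occ (q : 'I_n -> R) (r : 'I_n) :
  \sum_i q i = 1 -> \sum_f ffun_weight q f * occ f r = P%:R * q r.
Proof.
move=> q_sum1; under eq_bigr do rewrite mulr_sumr.
rewrite exchange_big /= (eq_bigr (fun=> q r)) => [|j _].
  by rewrite sumr_const card_ord mulr_natl.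
rewrite -[q r]expr1 -(cards1 j) -(sum_ffun_weight_hits _ _ q_sum1).
by apply: eq_bigr => f _; rewrite big_set1.
Qed.

Lemma occ_sqr (f : {ffun 'I_P -> 'I_n}) (r : 'I_n) :
  occ f r ^+ 2 = \sum_j1 \sum_j2 \prod_(j in [set j1; j2]) (f j == r)%:R.
Proof.
rewrite expr2 big_distrlr /=; apply: eq_bigr => j1 _; apply: eq_bigr => j2 _.
have [<-|ne] := eqVneq j1 j2.
  by rewrite setUid big_set1 -natrM mulnb andbb.
by rewrite big_setU1 ?inE //= big_set1.
Qed.

Lemma sum_ffun_weight_occ_sqr (q : 'I_n -> R) (r : 'I_n) :
  \sum_i q i = 1 ->
  \sum_f ffun_weight q f * occ f r ^+ 2 = P%:R * q r + P%:R * (P%:R - 1) * q r ^+ 2.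
Proof.
move=> q_sum1.
have pair_sum (j1 : 'I_P) : \sum_j2 q r ^+ #|[set j1; j2]| = q r + (P%:R - 1) * q r ^+ 2.
  have P_gt0 : (0 < P)%N := leq_ltn_trans (leq0n j1) (ltn_ord j1).
  rewrite (bigD1 j1) //= setUid cards1 expr1; congr (_ + _).
  rewrite (eq_bigr (fun=> q r ^+ 2)) => [|j2 ne]; last by rewrite cards2 eq_sym ne.
  by rewrite sumr_const cardC1 card_ord -[LHS]mulr_natl -subn1 natrB.
transitivity (\sum_j1 \sum_j2 \sum_f
                ffun_weight q f * \prod_(j in [set j1; j2]) (f j == r)%:R).
  under eq_bigr do rewrite occ_sqr mulr_sumr.
  rewrite exchange_big; apply: eq_bigr => j1 _.
  under eq_bigr do rewrite mulr_sumr.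
  exact: exchange_big.
under eq_bigr do under eq_bigr do rewrite sum_ffun_weight_hits //.
under eq_bigr do rewrite pair_sum.
by rewrite sumr_const card_ord -mulr_natl; ring.
Qed.

Definition empirical_vec (x : 'cV[R]_n) (f : {ffun 'I_P -> 'I_n}) : 'cV[R]_n :=
  (norm1 x / P%:R) *: \col_r (Num.sg (x r 0) * occ f r).

Lemma empirical_vec_support (x : 'cV[R]_n) (f : {ffun 'I_P -> 'I_n}) :
  (#|supp (empirical_vec x f)| <= P)%N.
Proof.
rewrite -[P in (_ <= P)%N]card_ord; apply: leq_trans (leq_imset_card f _).
apply/subset_leq_card/subsetP => i; rewrite !inE !mxE => nz; apply/imsetP.
have [j /eqP fj|none] := pickP (fun j => f j == i); first by exists j.
by move: nz; rewrite /occ big1 ?mulr0 ?eqxx // => j _; rewrite none.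
Qed.

Definition empirical_msq (x : 'cV[R]_n) : R :=
  (1 - P%:R^-1) * sqnorm2 x + norm1 x ^+ 2 / P%:R.

Lemma sqnorm2_le_empirical_msq (x : 'cV[R]_n) : sqnorm2 x <= empirical_msq x.
Proof.
rewrite /empirical_msq.
have : 0 <= P%:R^-1 * (norm1 x ^+ 2 - sqnorm2 x).
  by rewrite mulr_ge0 ?invr_ge0 ?ler0n ?subr_ge0 ?sqnorm2_le_sqr_norm1.
lra.
Qed.

Lemma empirical_msq0 : empirical_msq (0 : 'cV[R]_n) = 0.
Proof.
rewrite /empirical_msq norm10 /sqnorm2 big1 => [|i _]; last by rewrite mxE expr0n.
by rewrite mulr0 add0r expr0n mul0r.
Qed.

Section EmpiricalMoments.
Variable x : 'cV[R]_n.
Hypotheses (P_gt0 : (0 < P)%N) (x_neq0 : norm1 x != 0).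
Let q i := `|x i 0| / norm1 x.

Lemma abs_weights_sum1 : \sum_i q i = 1.
Proof. by rewrite -mulr_suml divff. Qed.

Lemma empirical_vec_mean : \sum_f ffun_weight q f *: empirical_vec x f = x.
Proof.
have P_neq0 : P%:R != 0 :> R by rewrite pnatr_eq0 -lt0n.
apply/colP => r; rewrite summxE.
rewrite (eq_bigr (fun f => norm1 x / P%:R * Num.sg (x r 0) * (ffun_weight q f * occ f r)));
  last by move=> f _; rewrite !mxE; ring.
rewrite -mulr_sumr sum_ffun_weight_occ ?abs_weights_sum1 // /q.
by rewrite [RHS]numEsg; field; rewrite P_neq0 x_neq0.
Qed.

Lemma empirical_vec_sqnorm2_mean :
  \sum_f ffun_weight q f * sqnorm2 (empirical_vec x f) = empirical_msq x.
Proof.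
have P_neq0 : P%:R != 0 :> R by rewrite pnatr_eq0 -lt0n.
transitivity (\sum_r (norm1 x / P%:R) ^+ 2 * Num.sg (x r 0) ^+ 2
                * \sum_f ffun_weight q f * occ f r ^+ 2).
  under eq_bigr do rewrite /sqnorm2 mulr_sumr.
  rewrite exchange_big; apply: eq_bigr => r _; rewrite mulr_sumr.
  by apply: eq_bigr => f _; rewrite !mxE; ring.
under eq_bigr do rewrite sum_ffun_weight_occ_sqr ?abs_weights_sum1 // sqr_sg.
transitivity (\sum_r (norm1 x / P%:R * `|x r 0| + (1 - P%:R^-1) * x r 0 ^+ 2)).
  apply: eq_bigr => r _; rewrite /q.
  have [->|_] := eqVneq (x r 0) 0; first by rewrite normr0 /=; ring.
  by rewrite -[x r 0 ^+ 2]real_normK ?num_real //=; field; rewrite P_neq0 x_neq0.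
rewrite big_split /= -!mulr_sumr -/(norm1 x) -/(sqnorm2 x) /empirical_msq.
by field.
Qed.

End EmpiricalMoments.

(* Maurey's empirical method: [x] is the mean of the [P]-sparse random vectors
   [empirical_vec x f], whose [P] coordinates [f j] are i.i.d. with law
   [|x i| / norm1 x]; concavity of the square root then bounds the mean of
   their [norm2] by [Num.sqrt (empirical_msq x)]. *)
Lemma maurey_norm1 m (A : 'M[R]_(m, n)) (U : R) (x : 'cV[R]_n) :
  (0 < P)%N -> 0 <= U ->
  (forall z : 'cV[R]_n, (#|supp z| <= P)%N ->
     norm1 (A *m z) <= U * norm2 z) ->
  norm1 (A *m x) <= U * Num.sqrt (empirical_msq x).
Proof.
move=> P_gt0 U_ge0 A_sparse.
have [->|x_neq0] := eqVneq x 0.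
  by rewrite mulmx0 norm10 mulr_ge0 ?sqrtr_ge0.
rewrite -norm1_eq0 in x_neq0.
have w_ge0 f : 0 <= ffun_weight (fun i => `|x i 0| / norm1 x) f.
  by apply: prodr_ge0 => j _; rewrite divr_ge0 ?norm1_ge0.
rewrite -{1}(empirical_vec_mean P_gt0 x_neq0) mulmx_sumr.
apply: le_trans (ler_norm1_sum _) _.
under eq_bigr do rewrite -scalemxAr norm1Z //.
apply: le_trans (ler_sum _ (fun f _ => ler_wpM2l (w_ge0 f)
                  (A_sparse _ (empirical_vec_support x f)))) _.
under eq_bigr do rewrite mulrCA.
rewrite -mulr_sumr ler_wpM2l // -(empirical_vec_sqnorm2_mean P_gt0 x_neq0).
apply: sum_mul_sqrt_le => // [f|]; first exact: sqnorm2_ge0.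
exact/sum_ffun_weight/abs_weights_sum1.
Qed.

End EmpiricalMethod.

(* [th] bounds every entry of the tail, of l1 mass [t] and squared l2 mass [rho],
   and is dominated by each of the [p] head entries, of total mass [w]. *)
Lemma tail_msq_ineq (R : rcfType) (k p beta th t w rho : R) :
  1 <= k -> 0 <= p -> 0 < beta -> beta < p + 1 -> 0 <= th -> th <= t ->
  p * th <= w -> rho <= th * t ->
  (1 - (k + p)^-1) * rho + t ^+ 2 / (k + p) <= (w + t) ^+ 2 / beta.
Proof.
move=> k_ge1 p_ge0 beta_gt0 beta_lt th_ge0 th_le_t pth_le rho_le.
have P_gt0 : 0 < k + p by lra.
have t_ge0 : 0 <= t by lra.
have pth_ge0 : 0 <= p * th by rewrite mulr_ge0.
apply: (@le_trans _ _ (((k + p - 1) * (th * t) + t ^+ 2) / (k + p))).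
  have -> : (1 - (k + p)^-1) * rho + t ^+ 2 / (k + p)
          = ((k + p - 1) * rho + t ^+ 2) / (k + p) by field; rewrite gt_eqF.
  by rewrite ler_pM2r ?invr_gt0 // lerD2r ler_wpM2l // subr_ge0; lra.
apply: (@le_trans _ _ ((p * th + t) ^+ 2 / (p + 1))).
  rewrite ler_pdivrMr // mulrAC ler_pdivlMr; last by lra.
  have gap : (p * th + t) ^+ 2 * (k + p) - ((k + p - 1) * (th * t) + t ^+ 2) * (p + 1)
           = (k + p) * p ^+ 2 * th ^+ 2 + (k + p) * p * (th * t) + (k - 1) * (t * (t - th)).
    by ring.
  have h1 : 0 <= (k + p) * p ^+ 2 * th ^+ 2 by rewrite !mulr_ge0 ?sqr_ge0 //; lra.
  have h2 : 0 <= (k + p) * p * (th * t) by rewrite !mulr_ge0 //; lra.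
  have h3 : 0 <= (k - 1) * (t * (t - th)) by rewrite !mulr_ge0 //; lra.
  by rewrite -subr_ge0 gap; lra.
apply: (@le_trans _ _ ((w + t) ^+ 2 / (p + 1))).
  rewrite ler_pM2r ?invr_gt0; last by lra.
  by rewrite lerXn2r ?nnegrE //; lra.
rewrite ler_wpM2l ?sqr_ge0 // lef_pV2 ?posrE; lra.
Qed.

Section HeavyHead.
Variables (R : rcfType) (n : nat) (v : 'cV[R]_n) (S : {set 'I_n}) (beta : R).

Lemma exists_heavy_head : 0 <= beta -> exists B : {set 'I_n},
  [/\ B \subset ~: S, #|B|%:R <= beta,
      forall j, j \notin S :|: B -> v j 0 != 0 -> beta < #|B|.+1%:R
    & forall i j, i \in B -> j \notin S :|: B -> `|v j 0| <= `|v i 0|].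
Proof.
move=> beta_ge0.
pose mass (B : {set 'I_n}) := \sum_(i in B) `|v i 0|.
pose admissible (B : {set 'I_n}) := (B \subset ~: S) && (#|B|%:R <= beta).
have adm0 : admissible set0 by rewrite /admissible sub0set cards0.
have [B /andP [BS Bbeta] Bmax] := arg_maxP mass adm0.
exists B; split=> // [j | i j iB]; rewrite inE negb_or => /andP [jS jB].
- move=> vj; rewrite ltNge; apply/negP => le_beta.
  have adm : admissible (j |: B).
    by rewrite /admissible subUset sub1set inE jS BS cardsU1 jB.
  have := Bmax _ adm; rewrite /mass big_setU1 //= gerDr normr_le0.
  exact/negP.
- rewrite leNgt; apply/negP => lt_ij.
  have adm : admissible (j |: (B :\ i)).
    rewrite /admissible subUset sub1set inE jS (subset_trans (subD1set B i) BS).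
    rewrite cardsU1 in_setD1 (negbTE jB) andbF.
    by move: Bbeta; rewrite (cardsD1 i B) iB.
  have := Bmax _ adm; rewrite /mass big_setU1 ?in_setD1 ?(negbTE jB) ?andbF //=.
  by rewrite [X in _ <= X](big_setD1 i iB) /= lerD2r leNgt lt_ij.
Qed.

Lemma empirical_msq_tail_le (k : nat) (B : {set 'I_n}) :
  (0 < k)%N -> 0 < beta -> B \subset ~: S ->
  (forall j, j \notin S :|: B -> v j 0 != 0 -> beta < #|B|.+1%:R) ->
  (forall i j, i \in B -> j \notin S :|: B -> `|v j 0| <= `|v i 0|) ->
  empirical_msq (k + #|B|) (restr (~: (S :|: B)) v)
    <= norm1 (restr (~: S) v) ^+ 2 / beta.
Proof.
move=> k_gt0 beta_gt0 BS B_full B_heavy.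
set r := restr (~: (S :|: B)) v.
have r_cases : r = 0 \/ exists j0, r j0 0 != 0.
  have [j0 /= rj0|none] := pickP (fun j => r j 0 != 0); first by right; exists j0.
  by left; apply/colP => j; rewrite [RHS]mxE; apply/eqP/negbFE; exact: none.
case: r_cases => [->|[j0 rj0]]; first by rewrite empirical_msq0 divr_ge0 ?sqr_ge0 ?ltW.
have [j0T vj0] : j0 \notin S :|: B /\ v j0 0 != 0.
  by move: rj0; rewrite restrE in_setC; case: (j0 \in S :|: B); rewrite ?eqxx.
have := B_full _ j0T vj0; rewrite -natr1 => beta_lt.
have th_heavy i : i \in B -> normoo r <= `|v i 0|.
  move=> iB; apply: bigmax_le => // j _; rewrite restrE inE.
  by case: ifP => [jT|_]; [exact: B_heavy | rewrite normr0].
have massB : #|B|%:R * normoo r <= \sum_(i in B) `|v i 0|.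
  by rewrite mulr_natl -sumr_const; apply: ler_sum => i /th_heavy.
have split_mass : norm1 (restr (~: S) v) = \sum_(i in B) `|v i 0| + norm1 r.
  by rewrite !norm1_restr (big_setID B) /= (setIidPr BS) setDE -setCU.
have k_ge1 : 1 <= k%:R :> R by rewrite ler1n.
rewrite split_mass /empirical_msq natrD.
exact: tail_msq_ineq k_ge1 (ler0n _ _) beta_gt0 beta_lt (normoo_ge0 r)
  (normoo_le_norm1 r) massB (sqnorm2_le_normoo_norm1 r).
Qed.

End HeavyHead.

Section SplitBounds.
Variables (R : rcfType) (alpha Delta s L U V Y W Nv Ny Nr : R).
Hypotheses (alpha_gt0 : 0 < alpha) (s_gt0 : 0 < s) (W_le : W <= Delta + s * Y).

Lemma split_upper_bound :
  0 <= U -> Y <= V -> Ny <= U * Y -> Nr <= U * (W / (alpha * s)) -> Nv <= Ny + Nr ->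
  Nv <= U * (1 + alpha^-1) * V + U * Delta / (alpha * s).
Proof.
move=> U_ge0 YV Ny_le Nr_le Nv_le.
have X_le : W / (alpha * s) <= Delta / (alpha * s) + Y / alpha.
  have -> : Delta / (alpha * s) + Y / alpha = (Delta + s * Y) / (alpha * s).
    by field; rewrite !gt_eqF.
  by rewrite ler_pM2r // invr_gt0 mulr_gt0.
have h1 := ler_wpM2l U_ge0 X_le.
have h2 := ler_wpM2l U_ge0 YV.
have h3 : U * (Y / alpha) <= U * (V / alpha) by rewrite ler_wpM2l // ler_pM2r ?invr_gt0.
lra.
Qed.

Lemma split_lower_bound :
  0 < L -> L <= U -> 0 <= Delta -> 0 <= V -> V <= Y + W / (alpha * s) ->
  L * Y <= Ny -> Nr <= U * (W / (alpha * s)) -> Ny - Nr <= Nv -> 0 <= Nv ->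
  L / (1 + alpha) * (alpha - U / L) * V - 2 * U * Delta / (alpha * s) <= Nv.
Proof.
move=> L_gt0 LU Delta_ge0 V_ge0 VY Ny_ge Nr_le Nv_ge Nv_ge0.
set E := Delta / (alpha * s); set X := W / (alpha * s) in VY Nr_le *.
have as_gt0 : 0 < alpha * s by rewrite mulr_gt0.
have E_ge0 : 0 <= E by rewrite divr_ge0 // ltW.
have X_le : X <= E + Y / alpha.
  have -> : E + Y / alpha = (Delta + s * Y) / (alpha * s) by rewrite /E; field; rewrite !gt_eqF.
  by rewrite ler_pM2r // invr_gt0.
have -> : L / (1 + alpha) * (alpha - U / L) = (L * alpha - U) / (1 + alpha).
  by field; rewrite !gt_eqF // ltr_wpDr // ltW.
set c := (L * alpha - U) / (1 + alpha).
have U_ge0 : 0 <= U by apply: le_trans (ltW L_gt0) LU.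
have h0 := ler_wpM2l U_ge0 X_le.
have [c_le0|c_gt0] := lerP c 0.
  have : c * V <= 0 by rewrite mulr_le0_ge0.
  have : 0 <= U * E by rewrite mulr_ge0.
  rewrite -mulrA -/E; lra.
have h1 := ler_wpM2l (ltW c_gt0) VY.
have h2 := ler_wpM2l (ltW c_gt0) X_le.
have h3 : c * E <= U * E.
  rewrite ler_wpM2r // /c ler_pdivrMr ?ltr_wpDr ?ltW //.
  have := ler_wpM2r (ltW alpha_gt0) LU; lra.
have h4 : c * Y + c * (Y / alpha) = L * Y - U * (Y / alpha).
  by rewrite /c; field; rewrite !gt_eqF // ltr_wpDr // ltW.
rewrite -mulrA -/E; lra.
Qed.

End SplitBounds.

Section SparseSplit.
Variables (R : rcfType) (m n k : nat) (A : 'M[R]_(m, n)) (alpha U : R) (S : {set 'I_n}).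
Hypotheses (k_gt0 : (1 <= k)%N) (alpha_gt0 : 0 < alpha) (U_ge0 : 0 <= U) (cardS : #|S| = k).
Hypothesis A_sparse_le : forall z : 'cV[R]_n,
  sparse ((1 + alpha ^+ 2) * k%:R) z -> norm1 (A *m z) <= U * norm2 z.

Lemma exists_sparse_split (v : 'cV[R]_n) :
  exists2 T : {set 'I_n}, S \subset T &
    [/\ sparse ((1 + alpha ^+ 2) * k%:R) (restr T v),
        norm1 (A *m restr (~: T) v)
          <= U * (norm1 (restr (~: S) v) / (alpha * Num.sqrt k%:R))
      & norm2 (restr (~: T) v) <= norm1 (restr (~: S) v) / (alpha * Num.sqrt k%:R)].
Proof.
set beta := alpha ^+ 2 * k%:R; set X := norm1 _ / _.
have beta_gt0 : 0 < beta by rewrite mulr_gt0 ?exprn_gt0 ?ltr0n.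
have [B [BS Bbeta B_full B_heavy]] := exists_heavy_head v S (ltW beta_gt0).
have sparse_kB z : (#|supp z| <= k + #|B|)%N -> sparse ((1 + alpha ^+ 2) * k%:R) z.
  move=> supp_le; apply: le_trans (_ : (k + #|B|)%:R <= _); first by rewrite ler_nat.
  by rewrite natrD mulrDl mul1r -/beta lerD2l.
have sqrt_msq_le : Num.sqrt (empirical_msq (k + #|B|) (restr (~: (S :|: B)) v)) <= X.
  have X_ge0 : 0 <= X by rewrite divr_ge0 ?norm1_ge0 ?mulr_ge0 ?sqrtr_ge0 ?ltW.
  rewrite -(ger0_norm X_ge0) -sqrtr_sqr ler_wsqrtr //.
  rewrite expr_div_n exprMn sqr_sqrtr ?ler0n //.
  exact: empirical_msq_tail_le.
exists (S :|: B); first exact: subsetUl.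
split.
- apply: sparse_kB; rewrite -cardS; apply: leq_trans (leq_card_setU _ _).
  apply/subset_leq_card/subsetP => i; rewrite inE restrE.
  by case: ifP => // _; rewrite eqxx.
- apply: le_trans (ler_wpM2l U_ge0 sqrt_msq_le).
  apply: maurey_norm1 => //; first by rewrite addn_gt0 k_gt0.
  by move=> z /sparse_kB /A_sparse_le.
- apply: le_trans sqrt_msq_le; exact/ler_wsqrtr/sqnorm2_le_empirical_msq.
Qed.

End SparseSplit.

Unset Implicit Arguments.

Theorem lemma3p3 (R : rcfType) (m n k : nat) (A : 'M[R]_(m, n))
  (alpha Delta L U : R) (S : {set 'I_n}) :
  (1 <= k)%N -> 0 < alpha -> 0 <= Delta -> 0 < L -> L <= U ->
  (forall v : 'cV[R]_n, sparse ((1 + alpha ^+ 2) * k%:R) v ->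
     L * norm2 v <= norm1 (A *m v) /\ norm1 (A *m v) <= U * norm2 v) ->
  #|S| = k ->
  forall v : 'cV[R]_n,
    Delta + norm1 (restr S v) >= norm1 (restr (~: S) v) ->
    L / (1 + alpha) * (alpha - U / L) * norm2 v
      - 2 * U * Delta / (alpha * Num.sqrt k%:R) <= norm1 (A *m v)
    /\ norm1 (A *m v) <= U * (1 + alpha^-1) * norm2 v
      + U * Delta / (alpha * Num.sqrt k%:R).
Proof.
move=> k_gt0 alpha_gt0 Delta_ge0 L_gt0 LU A_rip cardS v cone.
have U_ge0 : 0 <= U := le_trans (ltW L_gt0) LU.
have sqrtk_gt0 : 0 < Num.sqrt k%:R :> R by rewrite sqrtr_gt0 ltr0n.
have [T ST [yT Ar r2]] :=
  exists_sparse_split k_gt0 alpha_gt0 U_ge0 cardS (fun z zs => (A_rip z zs).2) v.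
have [Ly yU] := A_rip _ yT.
have W_le := norm1_restrC_le_cone ST cone; rewrite cardS in W_le.
have Av_split : A *m v = A *m restr T v + A *m restr (~: T) v.
  by rewrite -mulmxDr -restr_splitC.
set Ny := norm1 (A *m restr T v); set Nr := norm1 (A *m restr (~: T) v).
split.
- apply: (split_lower_bound (Ny := Ny) (Nr := Nr) alpha_gt0 sqrtk_gt0 W_le) => //.
  + exact: sqrtr_ge0.
  + by apply: le_trans (norm2_le_restr_splitC T v) _; rewrite lerD2l.
  + by rewrite Av_split lerB_norm1D.
  + exact: norm1_ge0.
- apply: (split_upper_bound (Ny := Ny) (Nr := Nr) alpha_gt0 sqrtk_gt0 W_le) => //.
  + exact: norm2_restr_le.
  + by rewrite Av_split ler_norm1D.
Qed.
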